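(* Let $\mathbf d\in\mathbb Z^{\Delta_0}$. Then $\langle\mathbf d,\mathbf d\rangle\ge-\delta\,(d_0-d_\infty)^2$. Moreover, equality holds if and only if $d_{i,j}=\frac{1}{m_i}\bigl((m_i-j)d_0+j\,d_\infty\bigr)$ for all $i\in[1,n]$ and $j\in[1,m_i-1]$.
   Context: $[a,b]=\{l\in\mathbb Z:a\le l\le b\}$. Fix $n\ge3$ and integers $m_1,\dots,m_n\ge2$. $\Delta_0=\{0,\infty\}\cup\{(i,j):i\in[1,n],j\in[1,m_i-1]\}$ (the vertex set of the quiver of the canonical algebra of type $(m_1,\dots,m_n)$). For $\mathbf d\in\mathbb Z^{\Delta_0}$ write $d_{i,0}=d_0$, $d_{i,m_i}=d_\infty$, $d_{i,j}=d_{(i,j)}$. The Ringel form is $\langle\mathbf d',\mathbf d''\rangle=d_0'd_0''+\sum_{i\in[1,n],j\in[1,m_i-1]}d'_{i,j}d''_{i,j}+d'_\infty d''_\infty-\sum_{i\in[1,n],j\in[1,m_i]}d'_{i,j}d''_{i,j-1}+(n-2)d'_\infty d''_0$. Set $\delta=\frac12\bigl(n-2-\frac1{m_1}-\cdots-\frac1{m_n}\bigr)$. *)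

From mathcomp Require Import all_boot all_order all_algebra.
Set Implicit Arguments. Unset Strict Implicit. Unset Printing Implicit Defensive.
Import Order.TTheory GRing.Theory Num.Theory.
Local Open Scope ring_scope.

(* A dimension vector d in Z^{Delta_0} of the canonical algebra of type
   (m_1,...,m_n) is represented by d_0, d_infty : int and a function
   d : nat -> nat -> int, of which only the entries d i j with
   1 <= i <= n, 1 <= j <= m_i - 1 are relevant. *)

Definition dv (m : nat -> nat) (d0 dinf : int) (d : nat -> nat -> int)
  (i j : nat) : int :=
  if j == 0%N then d0 else if j == m i then dinf else d i j.

Definition ringel (n : nat) (m : nat -> nat)
  (a0 ainf : int) (a : nat -> nat -> int)
  (b0 binf : int) (b : nat -> nat -> int) : int :=
  a0 * b0
  + \sum_(1 <= i < n.+1) \sum_(1 <= j < m i) a i j * b i j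
  + ainf * binf
  - \sum_(1 <= i < n.+1) \sum_(1 <= j < (m i).+1)
        dv m a0 ainf a i j * dv m b0 binf b i j.-1
  + (n%:Z - 2) * ainf * b0.

Definition delta (n : nat) (m : nat -> nat) : rat :=
  (n%:R - 2 - \sum_(1 <= i < n.+1) ((m i)%:R)^-1) / 2.

From mathcomp Require Import all_boot all_order all_algebra.
From mathcomp Require Import ring lra.
Import Order.TTheory GRing.Theory Num.Theory.
Local Open Scope ring_scope.

(* Read d along an arm 0 -> (i,1) -> ... -> (i,m_i-1) -> oo as a path
   x_0 = d_0, x_1, ..., x_m = d_oo.  Its contribution to <d,d> is
   sum x_j^2 - sum x_j x_(j-1) = (sum_k (x_(k+1) - x_k)^2 - x_0^2 - x_m^2) / 2, and
   since the increments x_(k+1) - x_k add up to x_m - x_0, the sum of their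
   squares is (x_m - x_0)^2 / m plus their squared deviation from the mean slope.
   Summing over the arms, <d,d> = - delta (d_0 - d_oo)^2 + (1/2) sum_i (deviation
   of arm i), and a deviation vanishes iff the arm is the linear interpolation
   (chord) between d_0 and d_oo. *)

Lemma psumr_nat_eq0 (R : numDomainType) (a b : nat) (F : nat -> R) :
    (forall i, (a <= i < b)%N -> 0 <= F i) ->
  \sum_(a <= i < b) F i = 0 <-> forall i, (a <= i < b)%N -> F i = 0.
Proof.
move=> F_ge0; rewrite big_nat_cond; split=> [/eqP | F0].
- rewrite psumr_eq0 => [/allP F0 i ab_i|i /andP[/F_ge0 //]].
  by apply/eqP; move: (F0 i); rewrite mem_index_iota ab_i => /(_ isT).
- by rewrite big1 // => i /andP[/F0].
Qed.

Lemma sumr_sqr_sub (R : comPzRingType) (a b : nat) (y : nat -> R) (c : R) :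
  \sum_(a <= k < b) (y k - c) ^+ 2 =
  \sum_(a <= k < b) y k ^+ 2 - 2 * c * \sum_(a <= k < b) y k + c ^+ 2 *+ (b - a).
Proof.
rewrite mulr_sumr -sumr_const_nat -sumrB -big_split /=.
by apply: eq_bigr => k _; ring.
Qed.

Section ChordDefect.
Context {R : realFieldType} (x : nat -> R).

Definition chord (m j : nat) : R := ((m - j)%:R * x 0 + j%:R * x m) / m%:R.

Definition chord_defect (m : nat) : R :=
  \sum_(0 <= k < m) (x k.+1 - x k - (x m - x 0) / m%:R) ^+ 2.

Lemma chordE m j : (0 < m)%N -> (j <= m)%N ->
  chord m j = x 0 + j%:R * ((x m - x 0) / m%:R).
Proof.
move=> m_gt0 le_jm; have m_neq0 : m%:R != 0 :> R by rewrite pnatr_eq0 -lt0n.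
by rewrite /chord natrB //; field.
Qed.

Lemma chord_defect_ge0 m : 0 <= chord_defect m.
Proof. by apply: sumr_ge0 => k _; apply: sqr_ge0. Qed.

Lemma sum_sqr_increments m : (0 < m)%N ->
  \sum_(0 <= k < m) (x k.+1 - x k) ^+ 2 = chord_defect m + (x m - x 0) ^+ 2 / m%:R.
Proof.
move=> m_gt0; have m_neq0 : m%:R != 0 :> R by rewrite pnatr_eq0 -lt0n.
rewrite /chord_defect sumr_sqr_sub telescope_sumr // subn0 -mulr_natr.
by field.
Qed.

Lemma path_energy m : (0 < m)%N ->
  \sum_(1 <= j < m) x j ^+ 2 - \sum_(1 <= j < m.+1) x j * x j.-1 =
  (\sum_(0 <= k < m) (x k.+1 - x k) ^+ 2 - x 0 ^+ 2 - x m ^+ 2) / 2.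
Proof.
case: m => // m _.
have -> : \sum_(0 <= k < m.+1) (x k.+1 - x k) ^+ 2 =
    \sum_(0 <= k < m.+1) x k.+1 ^+ 2 + \sum_(0 <= k < m.+1) x k ^+ 2
    - 2 * \sum_(0 <= k < m.+1) x k.+1 * x k.
  by rewrite mulr_sumr -big_split -sumrB; apply: eq_bigr => k _ /=; ring.
have -> : \sum_(0 <= k < m.+1) x k.+1 ^+ 2 = \sum_(1 <= j < m.+1) x j ^+ 2 + x m.+1 ^+ 2.
  by rewrite big_add1 big_nat_recr.
have -> : \sum_(0 <= k < m.+1) x k ^+ 2 = x 0 ^+ 2 + \sum_(1 <= j < m.+1) x j ^+ 2.
  by rewrite big_ltn.
have -> : \sum_(1 <= j < m.+2) x j * x j.-1 = \sum_(0 <= k < m.+1) x k.+1 * x k.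
  by rewrite big_add1.
by field.
Qed.

Lemma path_energy_chord_defect m : (0 < m)%N ->
  \sum_(1 <= j < m) x j ^+ 2 - \sum_(1 <= j < m.+1) x j * x j.-1 =
  chord_defect m / 2 + (x m - x 0) ^+ 2 / (2 * m%:R) - (x 0 ^+ 2 + x m ^+ 2) / 2.
Proof.
move=> m_gt0; have m_neq0 : m%:R != 0 :> R by rewrite pnatr_eq0 -lt0n.
by rewrite path_energy // sum_sqr_increments //; field.
Qed.

Lemma chord_defect_eq0 m : (0 < m)%N ->
  chord_defect m = 0 <-> forall j, (0 < j < m)%N -> x j = chord m j.
Proof.
move=> m_gt0; have m_neq0 : m%:R != 0 :> R by rewrite pnatr_eq0 -lt0n.
rewrite /chord_defect psumr_nat_eq0 => [|k _]; last exact: sqr_ge0.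
split=> [incr j /andP[_ lt_jm] | on_chord k /andP[_ lt_km]].
- suff x_lin i : (i <= m)%N -> x i = x 0 + i%:R * ((x m - x 0) / m%:R).
    by rewrite (x_lin j) ?chordE // ltnW.
  elim: i => [|i IH] lt_im; first by rewrite mul0r addr0.
  have /eqP := incr i lt_im; rewrite sqrf_eq0 subr_eq0 subr_eq => /eqP ->.
  by rewrite IH ?(ltnW lt_im) // -natr1; ring.
- have x_chord i : (i <= m)%N -> x i = chord m i.
    move=> le_im; rewrite chordE //.
    have [->|i_gt0] := posnP i; first by rewrite mul0r addr0.
    have [lt_im|ge_im] := ltnP i m; last first.
      have -> : i = m by apply/eqP; rewrite eqn_leq le_im ge_im.
      by field.
    by rewrite on_chord ?i_gt0 // chordE.
  rewrite (x_chord k.+1) // (x_chord k) ?(ltnW lt_km) // !chordE ?(ltnW lt_km) // -natr1.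
  by apply/eqP; rewrite sqrf_eq0; apply/eqP; ring.
Qed.

End ChordDefect.

Section RingelForm.
Variables (n : nat) (m : nat -> nat) (d0 dinf : int) (d : nat -> nat -> int).

Lemma dv_inner i j : (0 < j < m i)%N -> dv m d0 dinf d i j = d i j.
Proof. by rewrite /dv => /andP[/gtn_eqF-> /ltn_eqF->]. Qed.

Lemma dv_end i : (0 < m i)%N -> dv m d0 dinf d i (m i) = dinf.
Proof. by rewrite /dv eqxx => /gtn_eqF->. Qed.

Lemma ringel_diag :
  ringel n m d0 dinf d d0 dinf d =
  d0 ^+ 2 + dinf ^+ 2 + (n%:Z - 2) * d0 * dinf
  + \sum_(1 <= i < n.+1) (\sum_(1 <= j < m i) dv m d0 dinf d i j ^+ 2
      - \sum_(1 <= j < (m i).+1) dv m d0 dinf d i j * dv m d0 dinf d i j.-1).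
Proof.
rewrite /ringel sumrB.
have -> : \sum_(1 <= i < n.+1) \sum_(1 <= j < m i) d i j * d i j =
    \sum_(1 <= i < n.+1) \sum_(1 <= j < m i) dv m d0 dinf d i j ^+ 2.
  by apply: eq_bigr => i _; apply: eq_big_nat => j /dv_inner->; rewrite expr2.
ring.
Qed.

Definition arm i j : rat := (dv m d0 dinf d i j)%:~R.

Hypothesis m_gt0 : forall i, (1 <= i <= n)%N -> (0 < m i)%N.

Lemma ringel_diag_chord_defect :
  (ringel n m d0 dinf d d0 dinf d)%:~R =
  (\sum_(1 <= i < n.+1) chord_defect (arm i) (m i)) / 2
  - delta n m * ((d0 - dinf)%:~R) ^+ 2 :> rat.
Proof.
pose a : rat := d0%:~R; pose b : rat := dinf%:~R.
have arm_energy i : (1 <= i < n.+1)%N ->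
    (\sum_(1 <= j < m i) dv m d0 dinf d i j ^+ 2
      - \sum_(1 <= j < (m i).+1) dv m d0 dinf d i j * dv m d0 dinf d i j.-1)%:~R
    = chord_defect (arm i) (m i) / 2 + (a - b) ^+ 2 / 2 * ((m i)%:R)^-1
      - (a ^+ 2 + b ^+ 2) / 2 :> rat.
  move=> /m_gt0 mi_gt0; have mi_neq0 : (m i)%:R != 0 :> rat by rewrite pnatr_eq0 -lt0n.
  rewrite rmorphB !rmorph_sum /=.
  under eq_bigr do rewrite rmorphXn.
  under [X in _ - X]eq_bigr do rewrite rmorphM.
  by rewrite (path_energy_chord_defect (arm i)) // /arm dv_end //; field.
rewrite ringel_diag rmorphD rmorph_sum (eq_big_nat _ _ arm_energy) /=.
rewrite !big_split /= sumrN -mulr_suml -mulr_sumr sumr_const_nat subn1 /=.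
rewrite -[_ *+ n]mulr_natr /delta /a /b.
by field.
Qed.

Lemma chord_defect_arm_eq0 i : (0 < m i)%N ->
  chord_defect (arm i) (m i) = 0 <->
  forall j, (1 <= j <= (m i).-1)%N ->
    (d i j)%:~R = ((m i - j)%:R * d0%:~R + j%:R * dinf%:~R) / (m i)%:R :> rat.
Proof.
move=> mi_gt0; rewrite chord_defect_eq0 //.
have range j : (0 < j < m i)%N = (1 <= j <= (m i).-1)%N by case: (m i) mi_gt0.
have chord_arm j : chord (arm i) (m i) j
    = ((m i - j)%:R * d0%:~R + j%:R * dinf%:~R) / (m i)%:R.
  by rewrite /chord /arm dv_end.
split=> on_chord j j_in.
- by rewrite -chord_arm -dv_inner ?range //; apply: on_chord; rewrite range.
- by rewrite chord_arm /arm dv_inner // on_chord // -range.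
Qed.

End RingelForm.

Theorem lemma1p7 (n : nat) (m : nat -> nat)
  (hn : (3 <= n)%N) (hm : forall i, (1 <= i <= n)%N -> (2 <= m i)%N)
  (d0 dinf : int) (d : nat -> nat -> int) :
  let q := (ringel n m d0 dinf d d0 dinf d)%:~R : rat in
  q >= - delta n m * ((d0 - dinf)%:~R) ^+ 2 /\
  (q = - delta n m * ((d0 - dinf)%:~R) ^+ 2 <->
   forall i j, (1 <= i <= n)%N -> (1 <= j <= (m i).-1)%N ->
     (d i j)%:~R = ((m i - j)%:R * d0%:~R + j%:R * dinf%:~R) / (m i)%:R :> rat).
Proof.
have m_gt0 i : (1 <= i <= n)%N -> (0 < m i)%N by move/hm; apply: leq_trans.
move=> q; rewrite /q (ringel_diag_chord_defect _ _ _ _ _ m_gt0).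
set D := \sum_(1 <= i < n.+1) _.
have D_ge0 : 0 <= D by apply: sumr_ge0 => i _; apply: chord_defect_ge0.
split; first by lra.
transitivity (D = 0); first by split; lra.
rewrite psumr_nat_eq0 => [|i _]; last exact: chord_defect_ge0.
split=> [arm_chord i j i_in | lin i i_in]; last first.
  by apply/(chord_defect_arm_eq0 _ _ _ _ _ (m_gt0 i i_in)) => j; apply: lin.
move: j; apply/(chord_defect_arm_eq0 _ _ _ _ _ (m_gt0 i i_in)); exact: arm_chord.
Qed.
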